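(* Let $(M,d)$ be a homogeneous compact ultrametric space with no isolated points. (a) For every $r>0$, the optimal code of size $|\Pi(r)|$ in $(M,d)$ is unique up to isometry. (b) The symmetry strength of $(M,d)$ is infinite.
   Context: An ultrametric space satisfies $d(x,z)\leq\max(d(x,y),d(y,z))$. For $r>0$, $\Pi(r)$ is the (finite) partition of $M$ into open balls of radius $r$. Subsets $A,B\subseteq M$ are isometric if there is a bijection $f\colon A\to B$ with $d(f(x),f(y))=d(x,y)$; $M$ is homogeneous if every isometry between finite subsets extends to an isometry of $M$ onto itself. $x$ is isolated if some ball around $x$ contains only $x$. An optimal code of size $n$ is an $n$-element subset maximizing the minimum distance between distinct points; unique up to isometry means any two are related by an isometry of $M$. The symmetry strength of $M$ with isometry group $G$ is the supremum of $t$ such that for every size-$t$ subset $T\subseteq M$ there is $g\in G\setminus\{\mathrm{id}\}$ with $gT=T$. *)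

From Stdlib Require Import Reals List.
Import ListNotations.
Open Scope R_scope.

Section Defs.
Context {M : Type} (d : M -> M -> R).

Definition ultrametric_space : Prop :=
  (forall x y, d x y = 0 <-> x = y) /\
  (forall x y, d x y = d y x) /\
  (forall x y z, d x z <= Rmax (d x y) (d y z)).

Definition is_open (U : M -> Prop) : Prop :=
  forall x, U x -> exists e, 0 < e /\ forall y, d x y < e -> U y.

Definition compact_space : Prop :=
  forall (I : Type) (U : I -> M -> Prop),
    (forall i, is_open (U i)) -> (forall x, exists i, U i x) ->
    exists l : list I, forall x, exists i, In i l /\ U i x.

Definition isometry_of_M (g : M -> M) : Prop :=
  (forall x y, d (g x) (g y) = d x y) /\ (forall y, exists x, g x = y).

Definition isometry_between (A B : list M) (f : M -> M) : Prop :=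
  (forall x, In x A -> In (f x) B) /\
  (forall y, In y B -> exists x, In x A /\ f x = y) /\
  (forall x y, In x A -> In y A -> d (f x) (f y) = d x y).

Definition homogeneous : Prop :=
  forall (A B : list M) (f : M -> M), isometry_between A B f ->
    exists g, isometry_of_M g /\ forall x, In x A -> g x = f x.

Definition isolated (x : M) : Prop :=
  exists e, 0 < e /\ forall y, d x y < e -> y = x.

(** |Pi(r)| = n : the partition of M into open balls of radius r has exactly
    n blocks, i.e. there are n centers, pairwise at distance >= r (distinct
    balls), whose open r-balls cover M. *)
Definition card_Pi (r : R) (n : nat) : Prop :=
  exists c : list M, length c = n /\
    (forall i j, (i < n)%nat -> (j < n)%nat -> i <> j ->
       forall x0, r <= d (nth i c x0) (nth j c x0)) /\
    (forall x, exists y, In y c /\ d x y < r).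

Definition code (n : nat) (C : list M) : Prop := NoDup C /\ length C = n.

Definition separated (C : list M) (delta : R) : Prop :=
  forall x y, In x C -> In y C -> x <> y -> delta <= d x y.

(** C is an optimal code of size n: its minimum distance is maximal among
    all n-element subsets (min-dist C' <= min-dist C for every such C'). *)
Definition optimal_code (n : nat) (C : list M) : Prop :=
  code n C /\
  forall C', code n C' -> forall delta, separated C' delta -> separated C delta.

Definition maps_onto (g : M -> M) (C1 C2 : list M) : Prop :=
  (forall x, In x C1 -> In (g x) C2) /\
  (forall y, In y C2 -> exists x, In x C1 /\ g x = y).

Definition optimal_code_unique (n : nat) : Prop :=
  (exists C, optimal_code n C) /\
  forall C1 C2, optimal_code n C1 -> optimal_code n C2 ->
    exists g, isometry_of_M g /\ maps_onto g C1 C2.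

Definition symmetric_at (t : nat) : Prop :=
  forall T, code t T ->
    exists g, isometry_of_M g /\ (exists x, g x <> x) /\ maps_onto g T T.

(** Symmetry strength = sup { t | symmetric_at t } is infinite. *)
Definition symmetry_strength_infinite : Prop :=
  forall N : nat, exists t : nat, (N <= t)%nat /\ symmetric_at t.

End Defs.

From Stdlib Require Import Reals List Lra Lia.
From Stdlib Require Import Classical ClassicalEpsilon.
Open Scope R_scope.

(* In an ultrametric space, two points at distance at least r keep their
   distance when each is moved inside its open r-ball.

   (a) Let c be the centres of the balls of Pi(r). A code of size |c| whose
   minimum distance beats that of c is r-separated, so by counting it meets
   every ball of Pi(r); two of its points then reproduce a distance of c,
   which is absurd. Hence c is optimal, every optimal code is r-separated,
   and sending each point of one optimal code to the point of another in the
   same r-ball is an isometry between them, which homogeneity extends to M.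

   (b) Given a finite T, pick p outside T (no point is isolated) and q <> p
   closer to p than any point of T, so that d(q,t) = d(p,t) for t in T. The
   map fixing T and sending p to q is a partial isometry; its extension is a
   non-trivial isometry of M preserving T. *)

Lemma injective_map_onto {A : Type} (f : A -> A) (C D : list A) :
  NoDup C ->
  (forall a b, In a C -> In b C -> f a = f b -> a = b) ->
  (forall x, In x C -> In (f x) D) ->
  (length D <= length C)%nat ->
  forall y, In y D -> exists x, In x C /\ f x = y.
Proof.
  intros HC Hinj Hmaps Hlen y Hy.
  assert (HDC : incl D (map f C)).
  { apply NoDup_length_incl.
    - apply NoDup_map_NoDup_ForallPairs; [|exact HC].
      intros a b Ha Hb; exact (Hinj a b Ha Hb).
    - rewrite length_map; exact Hlen.
    - intros z Hz; apply in_map_iff in Hz.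
      destruct Hz as [x [<- Hx]]; exact (Hmaps x Hx). }
  apply HDC, in_map_iff in Hy.
  destruct Hy as [x [Hxy Hx]]; exists x; auto.
Qed.

Definition replace_point {M : Type} (p q z : M) : M :=
  if excluded_middle_informative (z = p) then q else z.

Lemma replace_point_eq {M : Type} (p q : M) : replace_point p q p = q.
Proof. unfold replace_point; destruct (excluded_middle_informative _); congruence. Qed.

Lemma replace_point_neq {M : Type} (p q z : M) : z <> p -> replace_point p q z = z.
Proof. unfold replace_point; destruct (excluded_middle_informative _); congruence. Qed.

Section Ultrametric.

Context {M : Type} (d : M -> M -> R).
Hypothesis Hum : ultrametric_space d.

Lemma dist_refl x : d x x = 0.
Proof. apply (proj1 Hum); reflexivity. Qed.

Lemma dist_sym x y : d x y = d y x.
Proof. apply (proj1 (proj2 Hum)). Qed.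

Lemma dist_eq0 x y : d x y = 0 -> x = y.
Proof. apply (proj1 Hum). Qed.

Lemma dist_pos x y : x <> y -> 0 < d x y.
Proof.
  intros Hxy.
  pose proof (proj2 (proj2 Hum) x y x) as Htri.
  rewrite dist_refl, (dist_sym y x) in Htri.
  assert (d x y <> 0) by (intros H; apply Hxy, dist_eq0, H).
  unfold Rmax in Htri; destruct (Rle_dec _ _); lra.
Qed.

Lemma dist_lt_trans x y z e : d x y < e -> d y z < e -> d x z < e.
Proof.
  intros Hxy Hyz. pose proof (proj2 (proj2 Hum) x y z) as Htri.
  unfold Rmax in Htri; destruct (Rle_dec _ _); lra.
Qed.

Lemma dist_isosceles x y z : d x y < d x z -> d y z = d x z.
Proof.
  intros Hlt.
  pose proof (proj2 (proj2 Hum) y x z) as H1.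
  pose proof (proj2 (proj2 Hum) x y z) as H2.
  rewrite (dist_sym y x) in H1.
  unfold Rmax in H1, H2.
  destruct (Rle_dec (d x y) (d x z)), (Rle_dec (d x y) (d y z)); lra.
Qed.

Lemma dist_ball_shift r x x' y y' :
  d x x' < r -> d y y' < r -> r <= d x y -> d x' y' = d x y.
Proof.
  intros Hx Hy Hr.
  assert (Ex : d x' y = d x y) by (apply dist_isosceles; lra).
  assert (Ey : d y' x' = d y x').
  { apply dist_isosceles. rewrite (dist_sym y x'), Ex. lra. }
  rewrite dist_sym, Ey, dist_sym. exact Ex.
Qed.

Definition covering (C : list M) (r : R) : Prop :=
  forall x, exists y, In y C /\ d x y < r.

Lemma separated_covering (c C : list M) r :
  covering c r -> NoDup C -> separated d C r ->
  (length c <= length C)%nat -> covering C r.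
Proof.
  intros Hc HC HsepC Hlen x.
  destruct (choice _ Hc) as [h Hh].
  assert (Hinj : forall a b, In a C -> In b C -> h a = h b -> a = b).
  { intros a b Ha Hb Hab. apply NNPP; intros Hne.
    assert (d a b < r).
    { apply dist_lt_trans with (h a); [apply Hh|].
      rewrite Hab, dist_sym; apply Hh. }
    pose proof (HsepC a b Ha Hb Hne); lra. }
  destruct (Hc x) as [z [Hz Hxz]].
  destruct (injective_map_onto h C c HC Hinj (fun y _ => proj1 (Hh y)) Hlen z Hz)
    as [y [Hy <-]].
  exists y; split; [exact Hy|].
  apply dist_lt_trans with (h y); [exact Hxz|].
  rewrite dist_sym; apply Hh.
Qed.

Lemma covering_isometry_between (C1 C2 : list M) r :
  NoDup C1 -> separated d C1 r -> covering C2 r ->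
  (length C2 <= length C1)%nat -> exists f, isometry_between d C1 C2 f.
Proof.
  intros HC1 Hsep1 Hcov2 Hlen.
  destruct (choice _ Hcov2) as [f Hf].
  assert (Hdist : forall x y, In x C1 -> In y C1 -> d (f x) (f y) = d x y).
  { intros x y Hx Hy. destruct (classic (x = y)) as [<-|Hne].
    - rewrite !dist_refl; reflexivity.
    - apply (dist_ball_shift r); [apply Hf|apply Hf|exact (Hsep1 x y Hx Hy Hne)]. }
  assert (Hinj : forall x y, In x C1 -> In y C1 -> f x = f y -> x = y).
  { intros x y Hx Hy Hxy. apply dist_eq0.
    rewrite <- (Hdist x y Hx Hy), Hxy. apply dist_refl. }
  exists f; split; [|split].
  - intros x _; apply Hf.
  - exact (injective_map_onto f C1 C2 HC1 Hinj (fun x _ => proj1 (Hf x)) Hlen).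
  - exact Hdist.
Qed.

Lemma homogeneous_maps_onto (A B : list M) f :
  homogeneous d -> isometry_between d A B f ->
  exists g, isometry_of_M d g /\ maps_onto g A B.
Proof.
  intros Hhom Hf. destruct (Hhom A B f Hf) as [g [Hg Hgf]].
  destruct Hf as [HAB [HBA _]].
  exists g; split; [exact Hg|split].
  - intros x Hx; rewrite Hgf by exact Hx; exact (HAB x Hx).
  - intros y Hy; destruct (HBA y Hy) as [x [Hx <-]].
    exists x; split; [exact Hx|exact (Hgf x Hx)].
Qed.

Lemma card_Pi_centers r n :
  0 < r -> card_Pi d r n ->
  exists c, code n c /\ separated d c r /\ covering c r.
Proof.
  intros Hr [c [Hlen [Hsep Hcov]]].
  exists c; split; [split|split]; [|exact Hlen| |exact Hcov].
  - destruct c as [|a c']; [constructor|].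
    apply (NoDup_nth _ a). intros i j Hi Hj Hij.
    apply NNPP; intros Hne.
    pose proof (Hsep i j ltac:(lia) ltac:(lia) Hne a) as Hd.
    rewrite Hij, dist_refl in Hd; lra.
  - intros x y Hx Hy Hxy.
    destruct (In_nth c x x Hx) as [i [Hi Ei]].
    destruct (In_nth c y x Hy) as [j [Hj Ej]].
    rewrite <- Ei, <- Ej.
    apply Hsep; [lia|lia|].
    intros <-; apply Hxy; rewrite <- Ei, <- Ej; reflexivity.
Qed.

Lemma centers_optimal (c : list M) r n :
  code n c -> separated d c r -> covering c r -> optimal_code d n c.
Proof.
  intros Hc Hsep Hcov; split; [exact Hc|].
  intros C [HNC HlenC] delta HdeltaC x y Hx Hy Hxy.
  destruct (Rle_or_lt delta (d x y)) as [Hle|Hlt]; [exact Hle|exfalso].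
  pose proof (Hsep x y Hx Hy Hxy) as Hrxy.
  assert (HsepC : separated d C r).
  { intros a b Ha Hb Hab. pose proof (HdeltaC a b Ha Hb Hab); lra. }
  assert (HcovC : covering C r).
  { apply (separated_covering c); [exact Hcov|exact HNC|exact HsepC|].
    destruct Hc as [_ Hlenc]; lia. }
  destruct (HcovC x) as [a [Ha Hxa]], (HcovC y) as [b [Hb Hyb]].
  assert (Hab : a <> b).
  { intros <-.
    assert (d x y < r) by (apply dist_lt_trans with a; [|rewrite dist_sym]; assumption).
    lra. }
  pose proof (HdeltaC a b Ha Hb Hab) as Hdab.
  rewrite (dist_ball_shift r x a y b Hxa Hyb Hrxy) in Hdab; lra.
Qed.

Lemma optimal_codes_isometric (c C1 C2 : list M) r n :
  homogeneous d -> code n c -> separated d c r -> covering c r ->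
  optimal_code d n C1 -> optimal_code d n C2 ->
  exists g, isometry_of_M d g /\ maps_onto g C1 C2.
Proof.
  intros Hhom Hc Hsep Hcov [[HN1 Hlen1] Hopt1] [[HN2 Hlen2] Hopt2].
  assert (Hsep1 : separated d C1 r) by exact (Hopt1 c Hc r Hsep).
  assert (Hsep2 : separated d C2 r) by exact (Hopt2 c Hc r Hsep).
  assert (Hcov2 : covering C2 r).
  { apply (separated_covering c); [exact Hcov|exact HN2|exact Hsep2|].
    destruct Hc as [_ Hlenc]; lia. }
  destruct (covering_isometry_between C1 C2 r HN1 Hsep1 Hcov2 ltac:(lia)) as [f Hf].
  exact (homogeneous_maps_onto C1 C2 f Hhom Hf).
Qed.

Lemma optimal_code_unique_of_card_Pi r n :
  homogeneous d -> 0 < r -> card_Pi d r n -> optimal_code_unique d n.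
Proof.
  intros Hhom Hr HPi.
  destruct (card_Pi_centers r n Hr HPi) as [c [Hc [Hsep Hcov]]].
  split.
  - exists c; exact (centers_optimal c r n Hc Hsep Hcov).
  - intros C1 C2; exact (optimal_codes_isometric c C1 C2 r n Hhom Hc Hsep Hcov).
Qed.

Lemma not_isolated_near x e :
  ~ isolated d x -> 0 < e -> exists y, y <> x /\ d x y < e.
Proof.
  intros Hx He. apply NNPP; intros Hnone. apply Hx.
  exists e; split; [exact He|].
  intros y Hy. apply NNPP; intros Hyx. apply Hnone. exists y; auto.
Qed.

Lemma exists_dist_lower_bound x (l : list M) :
  exists rho, 0 < rho /\ forall t, In t l -> t <> x -> rho <= d x t.
Proof.
  induction l as [|t l [rho [Hrho Hl]]].
  - exists 1; split; [lra|]. intros t [].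
  - destruct (classic (t = x)) as [->|Htx].
    + exists rho; split; [exact Hrho|].
      intros s [<-|Hs] Hsx; [contradiction|exact (Hl s Hs Hsx)].
    + exists (Rmin rho (d x t)); split.
      * apply Rmin_pos; [exact Hrho|apply dist_pos; auto].
      * intros s [<-|Hs] Hsx; [apply Rmin_r|].
        eapply Rle_trans; [apply Rmin_l|exact (Hl s Hs Hsx)].
Qed.

Hypothesis Hnoiso : forall x, ~ isolated d x.

Lemma exists_point_outside (x0 : M) (T : list M) : exists p, ~ In p T.
Proof.
  destruct (exists_dist_lower_bound x0 T) as [rho [Hrho HT]].
  destruct (not_isolated_near x0 rho (Hnoiso x0) Hrho) as [p [Hpx0 Hp]].
  exists p; intros HpT. pose proof (HT p HpT Hpx0); lra.
Qed.

Lemma exists_twin_point p (T : list M) :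
  ~ In p T -> exists q, q <> p /\ forall t, In t T -> d q t = d p t.
Proof.
  intros HpT.
  destruct (exists_dist_lower_bound p T) as [rho [Hrho HT]].
  destruct (not_isolated_near p rho (Hnoiso p) Hrho) as [q [Hqp Hq]].
  exists q; split; [exact Hqp|].
  intros t Ht. apply dist_isosceles.
  assert (Htp : t <> p) by (intros ->; contradiction).
  pose proof (HT t Ht Htp); lra.
Qed.

Lemma replace_point_isometry_between p q T :
  ~ In p T -> (forall t, In t T -> d q t = d p t) ->
  isometry_between d (p :: T) (q :: T) (replace_point p q).
Proof.
  intros HpT Hqt.
  assert (Hfix : forall t, In t T -> replace_point p q t = t).
  { intros t Ht; apply replace_point_neq; intros ->; contradiction. }
  split; [|split].
  - intros x [<-|Hx]; [rewrite replace_point_eq; left; reflexivity|].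
    rewrite Hfix by exact Hx; right; exact Hx.
  - intros y [<-|Hy]; [exists p; split; [left; reflexivity|apply replace_point_eq]|].
    exists y; split; [right; exact Hy|exact (Hfix y Hy)].
  - intros a b [<-|Ha] [<-|Hb]; rewrite ?replace_point_eq, ?Hfix by assumption.
    + rewrite !dist_refl; reflexivity.
    + exact (Hqt b Hb).
    + rewrite (dist_sym a q), (dist_sym a p); exact (Hqt a Ha).
    + reflexivity.
Qed.

Lemma symmetric_at_every (x0 : M) t : homogeneous d -> symmetric_at d t.
Proof.
  intros Hhom T _.
  destruct (exists_point_outside x0 T) as [p HpT].
  destruct (exists_twin_point p T HpT) as [q [Hqp Hqt]].
  destruct (Hhom (p :: T) (q :: T) (replace_point p q)) as [g [Hg Hgf]].
  { exact (replace_point_isometry_between p q T HpT Hqt). }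
  assert (Hfix : forall y, In y T -> g y = y).
  { intros y Hy. rewrite Hgf by (right; exact Hy).
    apply replace_point_neq; intros ->; contradiction. }
  exists g; split; [exact Hg|split; [|split]].
  - exists p. rewrite Hgf by (left; reflexivity). rewrite replace_point_eq; auto.
  - intros x Hx; rewrite Hfix; exact Hx.
  - intros y Hy; exists y; auto.
Qed.

End Ultrametric.

Theorem lemma4p18 (M : Type) (d : M -> M -> R) (x0 : M)
  (Hum : ultrametric_space d) (Hcpt : compact_space d)
  (Hhom : homogeneous d) (Hnoiso : forall x, ~ isolated d x) :
  (forall (r : R) (n : nat), 0 < r -> card_Pi d r n -> optimal_code_unique d n) /\
  symmetry_strength_infinite d.
Proof.
  (* Compactness only makes Pi(r) finite, which [card_Pi] already presupposes. *)
  split.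
  - intros r n Hr HPi. exact (optimal_code_unique_of_card_Pi d Hum r n Hhom Hr HPi).
  - intros N. exists N; split; [lia|].
    exact (symmetric_at_every d Hum Hnoiso x0 N Hhom).
Qed.
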